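(* Let $A$ generate a strongly continuous semigroup on a Banach space $X$ and let $\alpha\in\mathbb{R}$. Assume that for every $x\in\operatorname{Dom}(A)$ there is a constant $c_x$ with $\|e^{At}x\|_{\operatorname{Dom}(A)}\le c_xe^{\alpha t}$ for all $t\ge0$. Then there is a constant $c$ with $\|e^{At}\|_{X\to X}\le ce^{\alpha t}$ for all $t\ge0$.
   Context: $\|\cdot\|_{\operatorname{Dom}(A)}$ denotes the graph norm of $A$. *)

From HB Require Import structures.
From mathcomp Require Import all_boot all_order all_algebra.
From mathcomp Require Import all_classical all_reals all_analysis.
Set Implicit Arguments. Unset Strict Implicit. Unset Printing Implicit Defensive.
Import Order.TTheory GRing.Theory Num.Theory.
Import numFieldNormedType.Exports.
Local Open Scope ring_scope.
Local Open Scope classical_set_scope.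

(* A strongly continuous (C_0) semigroup of bounded linear operators
   (T t)_{t >= 0} on the Banach space X (values of T at t < 0 are irrelevant). *)
Definition is_C0_semigroup (R : realType) (X : completeNormedModType R)
  (T : R -> X -> X) : Prop :=
  [/\ (forall t, 0 <= t -> forall (a : R) (x y : X),
          T t (a *: x + y) = a *: T t x + T t y),
      (forall t, 0 <= t -> continuous (T t)),
      (forall x, T 0 x = x),
      (forall s t, 0 <= s -> 0 <= t -> forall x, T (s + t) x = T s (T t x)) &
      (forall x, T t x @[t --> 0^'+] --> x)].

Definition sg_quot (R : realType) (X : completeNormedModType R)
  (T : R -> X -> X) (x : X) : R -> X := fun h => h^-1 *: (T h x - x).

Definition gen_dom (R : realType) (X : completeNormedModType R)
  (T : R -> X -> X) (x : X) : Prop := cvg (sg_quot T x @ 0^'+).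

Definition gen (R : realType) (X : completeNormedModType R)
  (T : R -> X -> X) (x : X) : X := lim (sg_quot T x @ 0^'+).

Definition graph_norm (R : realType) (X : completeNormedModType R)
  (T : R -> X -> X) (x : X) : R := `|x| + `|gen T x|.

From HB Require Import structures.
From mathcomp Require Import all_boot all_order all_algebra.
From mathcomp Require Import all_classical all_reals all_analysis.
From mathcomp Require Import ring lra.
Import Order.TTheory GRing.Theory Num.Theory.
Import numFieldNormedType.Exports.
Local Open Scope classical_set_scope.
Local Open Scope ring_scope.

(* The graph-norm bound only controls orbits of points of Dom(A).  An
   arbitrary x is written as x = e^(-lam) T(1)x + (lam - A)y, where
   y = int_0^1 e^(-lam s) T(s)x ds lies in Dom(A).  Applying T(t), which
   commutes with A, gives
     |T(t)x| <= |e^(-lam) T(1)| |T(t)x| + (lam + 1) c_y e^(alpha t),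
   and for lam large the first term is absorbed: every orbit grows at most
   like e^(alpha t).  The uniform boundedness principle applied to the family
   e^(-alpha t) T(t) then bounds the operator norms.  Uniform boundedness also
   provides the local bound on |T(t)| used to construct the integral y as a
   limit of Riemann sums. *)

Lemma sumr_ord_shift {V : zmodType} (F : nat -> V) (N m : nat) :
  \sum_(k < N) F (k + m)%N - \sum_(k < N) F k = \sum_(k < m) (F (k + N)%N - F k).
Proof.
have sum_split a b :
    \sum_(k < a + b) F k = \sum_(k < a) F k + \sum_(k < b) F (k + a)%N.
  by rewrite big_split_ord; congr (_ + _); apply: eq_bigr => k _; rewrite /= addnC.
apply/eqP; rewrite sumrB subr_eq addrAC eq_sym subr_eq eq_sym; apply/eqP.
by rewrite addrC -sum_split addnC sum_split addrC.
Qed.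

Lemma sumr_ord_mul {V : nmodType} (F : nat -> V) (N L : nat) :
  \sum_(j < N * L) F j = \sum_(k < N) \sum_(i < L) F (k * L + i)%N.
Proof.
elim: N => [|N IHN]; first by rewrite mul0n !big_ord0.
by rewrite mulSnr big_split_ord IHN big_ord_recr.
Qed.

Lemma ler_norm_scale_sum {R : numDomainType} {V : normedModType R} (m : nat)
    (G : 'I_m -> V) (a c : R) :
  0 <= a -> (forall k, `|G k| <= c) -> `|a *: \sum_(k < m) G k| <= a * (m%:R * c).
Proof.
move=> a0 Gc; rewrite normrZ ger0_norm // ler_wpM2l //.
rewrite (le_trans (ler_norm_sum _ _ _)) // (le_trans (ler_sum _ (fun k _ => Gc k))) //.
by rewrite sumr_const card_ord mulr_natl.
Qed.

Lemma ler_norm_mean {R : numFieldType} {V : normedModType R} (N : nat)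
    (G : 'I_N -> V) (c : R) :
  (0 < N)%N -> (forall k, `|G k| <= c) -> `|N%:R^-1 *: \sum_(k < N) G k| <= c.
Proof.
move=> N0 Gc; rewrite (le_trans (ler_norm_scale_sum _ _ _ _ _ Gc)) ?invr_ge0 //.
by rewrite mulrA mulVf ?mul1r // pnatr_eq0 -lt0n.
Qed.

Section LinearFun.
Context {R : numFieldType} {V W : lmodType R} {f : V -> W} (f_lin : linear f).
Let F : {linear V -> W} := HB.pack f (GRing.isLinear.Build _ _ _ _ f f_lin).
Lemma lin0 : f 0 = 0. Proof. exact: (raddf0 F). Qed.
Lemma linB x y : f (x - y) = f x - f y. Proof. exact: (raddfB F). Qed.
Lemma linD x y : f (x + y) = f x + f y. Proof. exact: (raddfD F). Qed.
Lemma linZ a x : f (a *: x) = a *: f x. Proof. exact: (linearZ_LR F). Qed.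
Lemma lin_sum n (G : 'I_n -> V) : f (\sum_(i < n) G i) = \sum_(i < n) f (G i).
Proof. exact: (raddf_sum F). Qed.
End LinearFun.

Lemma uniform_boundedness {R : realType} {V : completeNormedModType R}
    {W : normedModType R} {I : Type} (f : I -> V -> W) :
  (forall i, linear (f i)) -> (forall i, continuous (f i)) ->
  (forall x, exists K, forall i, `|f i x| <= K) ->
  exists K, forall i x, `|f i x| <= K * `|x|.
Proof.
move=> f_lin f_cont f_ptw.
have [||K fK] := @Banach_Steinhauss R V W (range f) _ _ 1.
- move=> _ [i _ <-]; split => //.
  pose F : {linear V -> W} := HB.pack (f i) (GRing.isLinear.Build _ _ _ _ _ (f_lin i)).
  apply/(bounded_funP F); apply: (@continuous_linear_bounded R V W 0 F); exact: f_cont.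
- by move=> x; have [K fxK] := f_ptw x; exists K => _ [i _ <-].
exists K => i x; have [->|x0] := eqVneq x 0; first by rewrite lin0 // !normr0 mulr0.
have nx0 : 0 < `|x| by rewrite normr_gt0.
have := fK _ (imageT _ i) (`|x|^-1 *: x).
rewrite normrZ normfV normr_id mulVf ?gt_eqF // lexx linZ // => /(_ isT).
by rewrite normrZ normfV normr_id ler_pdivrMl // mulrC.
Qed.

Lemma expR_cvg_at_right0 {R : realType} (c : R) : expR (c * h) @[h --> 0^'+] --> (1 : R).
Proof.
apply: cvg_at_right_filter; rewrite -[X in _ --> X]expR0 -[X in _ --> expR X](mulr0 c).
apply: (@continuous_cvg _ _ _ _ _ (fun h => c * h) expR); first exact: continuous_expR.
by apply: cvgMr; exact: cvg_id.
Qed.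

Lemma cvg_dnbhs_at_right {R : realType} {V : topologicalType} (f : R -> V) (l : V) :
  f h @[h --> 0^'] --> l -> f h @[h --> 0^'+] --> l.
Proof. by apply: cvg_trans; apply: cvg_app; apply: within_subset => h /gt_eqF ->. Qed.

Lemma expR_quot_cvg_at_right0 {R : realType} (c : R) :
  h^-1 * (expR (c * h) - 1) @[h --> 0^'+] --> c.
Proof.
have D : is_derive (0 : R) 1 (expR \o ( *%R c)) (expR (c * 0) * c%:A).
  by apply: is_derive1_comp; exact: is_deriveZ.
have := @ex_derive _ _ _ _ _ _ _ D; rewrite /derivable => /cvg_ex[l Hl].
have lc : l = c.
  rewrite -(cvg_lim _ Hl) // -/(derive _ _ _) (@derive_val _ _ _ _ _ _ _ D).
  by rewrite mulr0 expR0 mul1r; exact: mulr1.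
rewrite lc in Hl; apply: cvg_dnbhs_at_right; apply: cvg_trans Hl.
apply: near_eq_cvg; near=> h; rewrite /= addr0 mulr0 expR0.
by congr (_ * (expR (c * _) - 1)); exact: mulr1.
Unshelve. all: by end_near. Qed.

Lemma near_infty_pow2Vn_lt {R : archiRealFieldType} (d : R) : 0 < d ->
  \forall j \near \oo, ((2 ^ j)%N%:R)^-1 < d.
Proof.
move=> d0; near=> j; apply: le_lt_trans (_ : j.+1%:R^-1 < d); last first.
  by near: j; exact: (near_infty_natSinv_lt (PosNum d0)).
by rewrite lef_pV2 ?posrE ?ltr0n ?expn_gt0 // ler_nat ltn_expl.
Unshelve. all: by end_near. Qed.

(* [dyadic_integral T x] stands for the Bochner integral int_0^1 T(s)x ds,
   which the library lacks: the limit of the left Riemann sums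
   [riemann_mean T N x] along N = 2^j.  They do converge for a C0-semigroup
   ([riemann_mean_dyadic_cvg]); otherwise [lim] returns a junk value. *)
Definition riemann_mean {R : realType} {X : normedModType R} (T : R -> X -> X)
  (N : nat) (x : X) : X := N%:R^-1 *: \sum_(k < N) T (k%:R / N%:R) x.

Definition dyadic_integral {R : realType} {X : normedModType R} (T : R -> X -> X)
  (x : X) : X := lim (riemann_mean T (2 ^ j) x @[j --> \oo]).

Section C0Semigroup.
Context {R : realType} {X : completeNormedModType R} {T : R -> X -> X}.
Hypothesis T_C0 : is_C0_semigroup T.

Let T_lin {t} : 0 <= t -> linear (T t). Proof. by case: T_C0 => + _ _ _ _; exact. Qed.
Let T_cont {t} : 0 <= t -> continuous (T t). Proof. by case: T_C0 => _ + _ _ _; exact. Qed.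
Let T0 x : T 0 x = x. Proof. by case: T_C0 => _ _ + _ _; exact. Qed.
Let TD s t : 0 <= s -> 0 <= t -> forall x, T (s + t) x = T s (T t x).
Proof. by case: T_C0 => _ _ _ + _; exact. Qed.
Let T_right x : T t x @[t --> 0^'+] --> x. Proof. by case: T_C0. Qed.

Lemma C0_near0 x e : 0 < e ->
  exists2 d, 0 < d & forall s, 0 <= s -> s < d -> `|T s x - x| <= e.
Proof.
move=> e0; have /cvgrPdist_le /(_ e e0) /nbhs_ballP[d d0 xTd] := T_right x.
exists d => // s; rewrite le_eqVlt => /predU1P[<- _|s0 sd].
  by rewrite T0 subrr normr0 ltW.
rewrite distrC; apply: xTd => //.
by rewrite /ball /= sub0r normrN gtr0_norm.
Qed.

Lemma C0_cvg_small_times (s : nat -> R) x : (forall n, 0 <= s n <= n.+1%:R^-1) ->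
  T (s n) x @[n --> \oo] --> x.
Proof.
move=> s_itv; apply/cvgrPdist_le => e e0.
have [d d0 Td] := C0_near0 x e e0.
near=> n; rewrite distrC; have /andP[s0 sn] := s_itv n; apply: Td => //.
apply: le_lt_trans sn _; near: n; exact: (near_infty_natSinv_lt (PosNum d0)).
Unshelve. all: by end_near. Qed.

(* Otherwise there are s_n <= 1/(n+1) with |T(s_n)| > n+1, although every
   orbit T(s_n)x converges to x: this contradicts uniform boundedness. *)
Lemma C0_bounded_near0 : exists n : nat,
  forall s, 0 <= s -> s <= n.+1%:R^-1 -> forall x, `|T s x| <= n.+1%:R * `|x|.
Proof.
apply/not_existsP => unbounded.
have /choice[g g_bad] : forall n : nat, exists p : R * X,
    [/\ 0 <= p.1, p.1 <= n.+1%:R^-1 & n.+1%:R * `|p.2| < `|T p.1 p.2|].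
  move=> n; have /existsNP[s /not_implyP[s0 /not_implyP[sn /existsNP[x Tx]]]] :=
    unbounded n.
  by exists (s, x); split => //=; rewrite ltNge; exact/negP.
have [|||K gK] := uniform_boundedness (fun n => T (g n).1).
- by move=> n; have [s0 _ _] := g_bad n; exact: T_lin.
- by move=> n; have [s0 _ _] := g_bad n; exact: T_cont.
- move=> x; have : cvgn (fun n => T (g n).1 x).
    by apply/cvg_ex; exists x; apply: C0_cvg_small_times => n; have [-> ->] := g_bad n.
  move=> /cvg_seq_bounded/ex_bound[|K gxK]; first exact: (@globally_properfilter _ _ 0%N).
  by exists K => n; exact: gxK.
have [_ _] := g_bad (Num.trunc K).
rewrite ltNge => /negP; apply; rewrite (le_trans (gK _ _)) // ler_wpM2r //.
exact/ltW/truncnS_gt.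
Qed.

Lemma C0_bound_pow (d M : R) : 0 < d -> 1 <= M ->
    (forall s, 0 <= s -> s <= d -> forall x, `|T s x| <= M * `|x|) ->
  forall k : nat, forall s, 0 <= s -> s <= k%:R * d -> forall x,
    `|T s x| <= M ^+ k * `|x|.
Proof.
move=> d0 M1 TM; elim=> [|k IHk] s s0 sk x.
  have -> : s = 0 by apply/eqP; rewrite eq_le s0 andbT -(mul0r d).
  by rewrite T0 expr0 mul1r.
have [sd|ds] := leP s d.
  by rewrite (le_trans (TM _ s0 sd x)) // ler_wpM2r // ler_eXnr.
have sd0 : 0 <= s - d by rewrite subr_ge0 ltW.
rewrite -(subrK d s) TD ?(ltW d0) // (le_trans (IHk _ sd0 _ _)) //.
  by rewrite lerBlDr -[d in _ + d]mul1r -mulrDl natr1.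
rewrite exprSr -mulrA ler_wpM2l ?exprn_ge0 ?(le_trans ler01) //.
exact: TM (ltW d0) (lexx d) x.
Qed.

Lemma C0_locally_bounded (tau : R) : exists2 M, 1 <= M &
  forall s, 0 <= s -> s <= tau -> forall x, `|T s x| <= M * `|x|.
Proof.
have [n Tn] := C0_bounded_near0; set d : R := n.+1%:R^-1 in Tn.
have d0 : 0 < d by rewrite invr_gt0.
have M1 : 1 <= n.+1%:R :> R by rewrite ler1n.
exists (n.+1%:R ^+ (Num.trunc (tau / d)).+1); first exact: exprn_ege1.
move=> s s0 stau; apply: (C0_bound_pow _ _ d0 M1 Tn) => //; apply: (le_trans stau).
by rewrite -ler_pdivrMr // ltW // truncnS_gt.
Qed.

Lemma C0_sg_quot_comm y v t : 0 <= t ->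
  sg_quot T y @ 0^'+ --> v -> sg_quot T (T t y) @ 0^'+ --> T t v.
Proof.
move=> t0 yv; apply: (cvg_trans _ (continuous_cvg _ (T_cont t0 v) yv)).
apply: near_eq_cvg; near=> h; have h0 : 0 <= h by near: h; exact: nbhs_right_ge.
by rewrite /sg_quot /= (linZ (T_lin t0)) (linB (T_lin t0)) -TD // [t + h]addrC TD.
Unshelve. all: by end_near. Qed.

Section RiemannMeans.
Variable M : R.
Hypothesis M_ge0 : 0 <= M.
Hypothesis T_bounded : forall s, 0 <= s -> s <= 2 -> forall x, `|T s x| <= M * `|x|.

Lemma riemann_mean_refine (N L : nat) x e : (0 < N)%N -> (0 < L)%N ->
    (forall s, 0 <= s -> s <= N%:R^-1 -> `|T s x - x| <= e) ->
  `|riemann_mean T (N * L) x - riemann_mean T N x| <= M * e.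
Proof.
move=> N0 L0 xe.
have Nr : 0 < N%:R :> R by rewrite ltr0n.
have Lr : 0 < L%:R :> R by rewrite ltr0n.
have kN0 (k : 'I_N) : 0 <= k%:R / N%:R :> R by rewrite divr_ge0.
have kN2 (k : 'I_N) : k%:R / N%:R <= 2 :> R.
  rewrite (@le_trans _ _ 1) ?ler1n // ler_pdivrMr // mul1r ler_nat ltnW //.
have iNL0 (i : 'I_L) : 0 <= i%:R / (N * L)%:R :> R by rewrite divr_ge0.
pose u := L%:R^-1 *: \sum_(i < L) (T (i%:R / (N * L)%:R) x - x).
have Tu (k : 'I_N) : T (k%:R / N%:R) u =
    L%:R^-1 *: \sum_(i < L) T ((k * L + i)%N%:R / (N * L)%:R) x - T (k%:R / N%:R) x.
  rewrite /u (linZ (T_lin (kN0 k))) (lin_sum (T_lin (kN0 k))).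
  under eq_bigr do rewrite (linB (T_lin (kN0 k))) -TD ?kN0 ?iNL0 //.
  rewrite sumrB sumr_const card_ord scalerBr -[T _ x *+ L]scaler_nat scalerA.
  rewrite mulVf ?gt_eqF // scale1r; congr (_ *: _ - _); apply: eq_bigr => i _.
  by congr (T _ x); rewrite natrD !natrM; field; rewrite ?gt_eqF.
have -> : riemann_mean T (N * L) x - riemann_mean T N x =
    N%:R^-1 *: \sum_(k < N) T (k%:R / N%:R) u.
  under [in RHS]eq_bigr do rewrite Tu.
  rewrite sumrB scalerBr /riemann_mean -scaler_sumr scalerA -invfM -natrM.
  by rewrite (sumr_ord_mul (fun j => T (j%:R / (N * L)%:R) x)).
apply: ler_norm_mean => // k; rewrite (le_trans (T_bounded _ (kN0 k) (kN2 k) _)) //.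
rewrite ler_wpM2l // ler_norm_mean // => i; apply: xe => //.
rewrite ler_pdivrMr ?ltr0n ?muln_gt0 ?N0 // natrM mulrA mulVf ?gt_eqF // mul1r.
by rewrite ler_nat ltnW.
Qed.

(* For m = floor(hN), T(h) shifts the Riemann sum by m grid steps, which
   telescopes to (1/N) sum_(k < m) T(k/N)(T(1)x - x), and by the remainder
   h - m/N < 1/N. *)
Lemma riemann_mean_shift (N m : nat) x (h e1 e2 : R) :
    (0 < N)%N -> 0 < h -> h <= 1 -> m%:R <= h * N%:R -> h * N%:R < m.+1%:R ->
    `|T (h - m%:R / N%:R) x - x| <= e1 ->
    (forall s, 0 <= s -> s <= h -> `|T s (T 1 x - x) - (T 1 x - x)| <= e2) ->
  `|T h (riemann_mean T N x) - riemann_mean T N x - h *: (T 1 x - x)|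
    <= M * e1 + h * e2 + `|T 1 x - x| / N%:R.
Proof.
move=> N0 h0 h1 mh hm xe1 we2.
have Nr : 0 < N%:R :> R by rewrite ltr0n.
have mNh : m%:R / N%:R <= h by rewrite ler_pdivrMr.
have mN : (m <= N)%N.
  by rewrite -(ler_nat R) (le_trans mh) // ler_piMl // ltW.
have kN0 (k : nat) : 0 <= k%:R / N%:R :> R by rewrite divr_ge0.
set w := T 1 x - x in we2 *; set r := h - m%:R / N%:R.
have r0 : 0 <= r by rewrite subr_ge0.
have -> : T h (riemann_mean T N x) - riemann_mean T N x =
    N%:R^-1 *: \sum_(k < N) T ((k + m)%N%:R / N%:R) (T r x - x) +
    N%:R^-1 *: \sum_(k < m) T (k%:R / N%:R) w.
  have Tk (k : 'I_N) : T h (T (k%:R / N%:R) x) =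
      T ((k + m)%N%:R / N%:R) (T r x - x) + T ((k + m)%N%:R / N%:R) x.
    rewrite -TD ?(ltW h0) // (linB (T_lin (kN0 _))) -TD // subrK.
    by congr (T _ x); rewrite /r natrD; field; rewrite gt_eqF.
  rewrite /riemann_mean (linZ (T_lin (ltW h0))) (lin_sum (T_lin (ltW h0))).
  under eq_bigr do rewrite Tk.
  rewrite big_split /= scalerDr -addrA -scalerBr.
  rewrite (sumr_ord_shift (fun j => T (j%:R / N%:R) x)); congr (_ + _ *: _).
  apply: eq_bigr => k _; rewrite /w (linB (T_lin (kN0 _))) -TD //.
  by congr (T _ x - _); rewrite natrD; field; rewrite gt_eqF.
rewrite -addrA (le_trans (ler_normD _ _)) // -addrA lerD //.
  apply: ler_norm_mean => // k; apply: (le_trans (T_bounded _ (kN0 _) _ _)).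
    rewrite ler_pdivrMr // -natrM ler_nat mul2n -addnn leq_add // ltnW //.
  by rewrite ler_wpM2l.
clearbody w; have -> : N%:R^-1 *: \sum_(k < m) T (k%:R / N%:R) w - h *: w =
    N%:R^-1 *: \sum_(k < m) (T (k%:R / N%:R) w - w) - r *: w.
  rewrite sumrB sumr_const card_ord scalerBr /r scalerBl -[w *+ m]scaler_nat scalerA.
  by rewrite [N%:R^-1 * _]mulrC opprB addrA subrK.
rewrite (le_trans (ler_normB _ _)) // lerD //.
  have e20 : 0 <= e2 := le_trans (normr_ge0 _) (we2 0 (lexx 0) (ltW h0)).
  rewrite (le_trans (ler_norm_scale_sum _ _ _ _ _ (fun k => we2 _ (kN0 k) _))) //.
  - by move=> k; rewrite (le_trans _ mNh) // ler_pM2r ?invr_gt0 // ler_nat ltnW.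
  - by rewrite mulrA ler_wpM2r // mulrC.
rewrite normrZ ger0_norm // mulrC ler_wpM2l // /r lerBlDr.
by rewrite -[X in X + _]mul1r -mulrDl addrC natr1 ler_pdivlMr // ltW.
Qed.

Lemma riemann_mean_dyadic_cvg x : cvgn (fun j => riemann_mean T (2 ^ j) x).
Proof.
apply: cauchy_cvg; apply: cauchy_exP => eps eps0.
have M1 : 0 < M + 1 by rewrite ltr_wpDl.
have e0 : 0 < eps / (M + 1) by rewrite divr_gt0.
have [d d0 xd] := C0_near0 x _ e0.
have [n _ nd] := near_infty_pow2Vn_lt _ d0.
exists (riemann_mean T (2 ^ n) x); exists n => // j /= nj.
rewrite -ball_normE /ball_ /= distrC -(subnKC nj) expnD.
apply: le_lt_trans (riemann_mean_refine _ _ x (eps / (M + 1)) _ _ _) _.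
- by rewrite expn_gt0.
- by rewrite expn_gt0.
- by move=> s s0 sn; apply: xd => //; apply: le_lt_trans sn (nd _ (leqnn n)).
- by rewrite mulrA ltr_pdivrMr // mulrDr mulr1 [M * _]mulrC ltrDl.
Qed.

Lemma dyadic_integral_shift x h e : 0 < h -> h <= 1 ->
    (forall s, 0 <= s -> s <= h -> `|T s (T 1 x - x) - (T 1 x - x)| <= e) ->
  `|T h (dyadic_integral T x) - dyadic_integral T x - h *: (T 1 x - x)| <= h * e.
Proof.
move=> h0 h1 we; set y := dyadic_integral T x; set w := T 1 x - x in we *.
have M1 : 0 < M + 1 by rewrite ltr_wpDl.
apply/ler_addgt0Pr => eta eta0; set e1 := eta / 3 / (M + 1).
have e10 : 0 < e1 by rewrite !divr_gt0.
have [d1 d10 xd1] := C0_near0 x _ e10.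
have w0 : 0 < eta / 3 / (`|w| + 1) by rewrite !divr_gt0 // ltr_pwDr.
near \oo => j.
have Nd1 : ((2 ^ j)%N%:R)^-1 < d1 by near: j; exact: near_infty_pow2Vn_lt.
have Nw : ((2 ^ j)%N%:R)^-1 < eta / 3 / (`|w| + 1).
  by near: j; exact: near_infty_pow2Vn_lt.
have yz : `|y - riemann_mean T (2 ^ j) x| <= e1.
  by near: j; exact: (cvgrPdist_le _ _).1 (riemann_mean_dyadic_cvg x) _ e10.
set N := (2 ^ j)%N in Nd1 Nw yz.
have N0 : (0 < N)%N by rewrite expn_gt0.
have Nr : 0 < N%:R :> R by rewrite ltr0n.
have /andP[mh hm] := truncn_itv (mulr_ge0 (ltW h0) (ltW Nr)).
set m := Num.trunc (h * N%:R) in mh hm.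
have xe1 : `|T (h - m%:R / N%:R) x - x| <= e1.
  apply: xd1; first by rewrite subr_ge0 ler_pdivrMr.
  rewrite (lt_trans _ Nd1) // ltrBlDr -[X in X + _]mul1r -mulrDl addrC natr1.
  by rewrite ltr_pdivlMr.
have := riemann_mean_shift _ _ _ _ _ _ N0 h0 h1 mh hm xe1 we.
set z := riemann_mean T N x => zw.
have -> : T h y - y - h *: w = (T h (y - z) - (y - z)) + (T h z - z - h *: w).
  rewrite (linB (T_lin (ltW h0))) [RHS]addrA; congr (_ - _).
  by rewrite [RHS]addrAC addrA subrK opprB addrA subrK.
have Tyz : `|T h (y - z)| <= M * `|y - z|.
  by apply: T_bounded; [exact: ltW | apply: le_trans h1 _; rewrite ler1n].
have Ma : M * `|y - z| + `|y - z| <= eta / 3.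
  by rewrite -[X in _ + X]mul1r -mulrDl mulrC -ler_pdivlMr.
have Me1 : M * e1 <= eta / 3.
  by rewrite mulrA ler_pdivrMr // mulrDr mulr1 [M * _]mulrC lerDl divr_ge0 ?ltW.
have wN : `|w| / N%:R <= eta / 3.
  move: Nw; rewrite ltr_pdivlMr ?ltr_pwDr // => /ltW; apply: le_trans.
  by rewrite mulrC ler_wpM2l ?lerDl // invr_ge0 ltW.
rewrite (le_trans (ler_normD _ _)) // (le_trans (lerD (ler_normB _ _) zw)) //.
by rewrite (le_trans (lerD (lerD Tyz (lexx _)) (lexx _))) //; lra.
Unshelve. all: by end_near. Qed.

Lemma dyadic_integral_sg_quot x :
  sg_quot T (dyadic_integral T x) @ 0^'+ --> T 1 x - x.
Proof.
set w := T 1 x - x; apply/cvgrPdist_le => e e0.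
have [d d0 wd] := C0_near0 w _ e0.
near=> h; have h0 : 0 < h by near: h; exact: nbhs_right_gt.
have hd : h < d by near: h; exact: nbhs_right_lt.
have h1 : h <= 1 by near: h; exact: nbhs_right_le.
have := dyadic_integral_shift x h e h0 h1 (fun s s0 sh => wd s s0 (le_lt_trans sh hd)).
have hV0 : 0 < h^-1 by rewrite invr_gt0.
rewrite -(ler_pM2l hV0) mulKf ?gt_eqF // -[h^-1 in X in X <= _](gtr0_norm hV0).
by rewrite -normrZ /sg_quot scalerBr scalerA mulVf ?gt_eqF // scale1r -normrN opprB.
Unshelve. all: by end_near. Qed.

End RiemannMeans.

Lemma C0_gen_range x : exists y, sg_quot T y @ 0^'+ --> T 1 x - x.
Proof.
have [M M1 TM] := C0_locally_bounded 2.
by exists (dyadic_integral T x); exact: (dyadic_integral_sg_quot _ (le_trans ler01 M1) TM).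
Qed.
End C0Semigroup.

Section Rescaling.
Context {R : realType} {X : completeNormedModType R}.
Variables (T : R -> X -> X) (lam : R).

Let S t x := expR (- (lam * t)) *: T t x.

Lemma C0_rescale : is_C0_semigroup T -> is_C0_semigroup S.
Proof.
case=> T_lin T_cont T0 TD T_right; split.
- by move=> t t0 a x y; rewrite /S T_lin // scalerDr !scalerA mulrC.
- by move=> t t0 x; apply: cvgZr; exact: T_cont.
- by move=> x; rewrite /S mulr0 oppr0 expR0 scale1r T0.
- move=> s t s0 t0 x; rewrite /S (linZ (T_lin _ s0)) TD // scalerA -expRD.
  by rewrite mulrDr opprD.
- move=> x; rewrite -[x in _ --> x]scale1r.
  by apply: cvgZ (T_right x); under eq_fun do rewrite -mulNr; exact: expR_cvg_at_right0.
Qed.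

Lemma sg_quot_rescale y v :
  sg_quot S y @ 0^'+ --> v -> sg_quot T y @ 0^'+ --> v + lam *: y.
Proof.
move=> Syv; rewrite -[v]scale1r; apply: cvg_trans (cvgD
  (cvgZ (expR_cvg_at_right0 lam) Syv) (cvgZ (expR_quot_cvg_at_right0 lam) (cvg_cst y))).
apply: near_eq_cvg; apply: nearW => h.
rewrite /sg_quot /S !fctE scalerA [expR _ * _]mulrC -scalerA scalerBr scalerA.
by rewrite -expRD addrN expR0 scale1r -scalerA -scalerDr scalerBl scale1r addrA subrK.
Qed.
End Rescaling.

(* The witness is y = int_0^1 e^(-lam s) T(s)x ds, the dyadic integral of the
   rescaled semigroup, for which (lam - A)y = x - e^(-lam) T(1)x. *)
Lemma C0_resolvent_decomposition {R : realType} {X : completeNormedModType R}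
    {T : R -> X -> X} (lam : R) : is_C0_semigroup T ->
  forall x, exists y, gen_dom T y /\ x = expR (- lam) *: T 1 x + lam *: y - gen T y.
Proof.
move=> T_C0 x; have [y Syv] := C0_gen_range (C0_rescale _ lam T_C0) x.
have Tyv := sg_quot_rescale _ _ _ _ Syv; exists y; split; first exact: cvgP Tyv.
rewrite /gen (cvg_lim _ Tyv) // mulr1 [_ - x + _]addrAC.
by rewrite opprB addrCA subrr addr0.
Qed.

Lemma C0_gen_comm {R : realType} {X : completeNormedModType R} {T : R -> X -> X} y t :
  is_C0_semigroup T -> gen_dom T y -> 0 <= t -> gen T (T t y) = T t (gen T y).
Proof.
by move=> T_C0 Dy t0; apply: cvg_lim => //; exact: C0_sg_quot_comm T_C0 _ _ _ t0 Dy.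
Qed.

Lemma C0_pointwise_exp_bound {R : realType} {X : completeNormedModType R}
    {T : R -> X -> X} (alpha : R) : is_C0_semigroup T ->
  (forall y, gen_dom T y -> exists c, forall t, 0 <= t ->
     graph_norm T (T t y) <= c * expR (alpha * t)) ->
  forall x, exists K, forall t, 0 <= t -> `|T t x| <= K * expR (alpha * t).
Proof.
move=> T_C0 dom_bound x; have [T_lin _ _ TD _] := T_C0.
have [M M1 TM] := C0_locally_bounded T_C0 1.
(* lam = 2M makes |e^(-lam) T(1)| <= 1/2, so that this term is absorbed. *)
pose lam := 2 * M; have lam0 : 0 < lam by rewrite mulr_gt0 // (lt_le_trans ltr01).
have small : expR (- lam) * M <= 1 / 2.
  rewrite expRN mulrC ler_pdivrMr ?expR_gt0 //.
  by have := expR_ge1Dx lam; rewrite /lam; lra.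
have [y [Dy xy]] := C0_resolvent_decomposition lam T_C0 x.
have [c yc] := dom_bound y Dy.
exists (2 * (lam + 1) * c) => t t0.
have Tx : T t x = expR (- lam) *: T 1 (T t x) + lam *: T t y - gen T (T t y).
  rewrite (C0_gen_comm _ _ T_C0 Dy t0) {1}xy (linB (T_lin _ t0)) (linD (T_lin _ t0)).
  by rewrite !(linZ (T_lin _ t0)) -!TD // [t + 1]addrC.
have := yc t t0; rewrite /graph_norm.
set n := `|T t x|; set a := `|T t y|; set g := `|gen T (T t y)|; set E := expR _.
have n1 : `|expR (- lam) *: T 1 (T t x)| <= n / 2.
  rewrite normrZ ger0_norm ?expR_ge0 //.
  rewrite (le_trans (ler_wpM2l (expR_ge0 _) (TM _ ler01 (lexx 1) _))) //.
  by rewrite mulrA (le_trans (ler_wpM2r (normr_ge0 _) small)) // mulrC mul1r.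
have n2 : n <= n / 2 + lam * a + g.
  rewrite {1}/n Tx (le_trans (ler_normB _ _)) // lerD2r (le_trans (ler_normD _ _)) //.
  by rewrite lerD // normrZ ger0_norm // ltW.
have a0 : 0 <= a := normr_ge0 _.
have g0 : 0 <= g := normr_ge0 _.
move=> agE; have lag : (lam + 1) * (a + g) <= (lam + 1) * (c * E).
  by rewrite ler_wpM2l // addr_ge0 // ltW.
have : 0 <= lam * g by rewrite mulr_ge0 // ltW.
lra.
Qed.

Theorem lemma4p11 (R : realType) (X : completeNormedModType R)
  (T : R -> X -> X) (alpha : R) :
  is_C0_semigroup T ->
  (forall x : X, gen_dom T x ->
     exists c_x : R, forall t : R, 0 <= t ->
       graph_norm T (T t x) <= c_x * expR (alpha * t)) ->
  exists c : R, forall t : R, 0 <= t ->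
    forall x : X, `|T t x| <= c * expR (alpha * t) * `|x|.
Proof.
move=> T_C0 dom_bound; have [T_lin T_cont _ _ _] := T_C0.
pose U (t : {t : R | 0 <= t}) x := expR (- (alpha * sval t)) *: T (sval t) x.
have [||| K UK] := uniform_boundedness U.
- by move=> [t t0] a x y; rewrite /U /= T_lin // scalerDr !scalerA mulrC.
- by move=> [t t0] x; apply: cvgZr; exact: T_cont.
- move=> x; have [K xK] := C0_pointwise_exp_bound _ T_C0 dom_bound x.
  exists K => -[t t0]; rewrite /U /= normrZ ger0_norm ?expR_ge0 // expRN.
  by rewrite ler_pdivrMl ?expR_gt0 // mulrC; exact: xK.
exists K => t t0 x; have := UK (exist _ t t0) x.
rewrite /U /= normrZ ger0_norm ?expR_ge0 // expRN ler_pdivrMl ?expR_gt0 //.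
by rewrite mulrA [_ * K]mulrC.
Qed.
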